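(* Let $n\ge1$, let $\alpha=(\alpha_1,\dots,\alpha_\ell)$ be a composition of $n$, and let $V_\alpha=\{\gamma\vDash n : S_\alpha\in U_\gamma\}$ be the set of compositions $\gamma$ of $n$ for which $S_\alpha$ is $\gamma$-unimodal. Then $$|V_\alpha| = 2^{n-1}\left(\tfrac34\right)^m,$$ where $m$ is the number of indices $i\in[\ell-1]$ with $\alpha_i>1$.
   Context: A composition $\alpha=(\alpha_1,\dots,\alpha_\ell)$ of $n$ (written $\alpha\vDash n$) is a sequence of positive integers summing to $n$; $\ell=\ell(\alpha)$ is its number of parts. Set $S_\alpha=\{\alpha_1,\alpha_1+\alpha_2,\dots,\alpha_1+\dots+\alpha_{\ell-1}\}\subseteq[n-1]$. The blocks of $\alpha$ are $B_i(\alpha)=\{\alpha_1+\dots+\alpha_{i-1}+1,\dots,\alpha_1+\dots+\alpha_i\}$ for $i\in[\ell]$. A set $S\subseteq[n-1]$ is $\gamma$-unimodal (for a composition $\gamma$ of $n$) if for every block $B_i(\gamma)$ the set $S\cap(B_i(\gamma)\setminus S_\gamma)$ is an initial segment (in increasing order) of $B_i(\gamma)\setminus S_\gamma$; equivalently, $S$ is the descent set of a permutation whose restriction to each block of $\gamma$ is a word $\sigma_a>\dots>\sigma_k<\dots<\sigma_b$. $U_\gamma$ denotes the set of $\gamma$-unimodal subsets of $[n-1]$. *)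

From mathcomp Require Import all_boot.
Set Implicit Arguments. Unset Strict Implicit. Unset Printing Implicit Defensive.

Definition is_composition (n : nat) (g : seq nat) : bool :=
  all (fun x => 0 < x) g && (sumn g == n).

Definition Sset (g : seq nat) : seq nat :=
  [seq sumn (take i g) | i <- iota 1 (size g).-1].

(* block i (0-indexed, i < size g) = B_{i+1}(g)
   = { g_1+...+g_i + 1, ..., g_1+...+g_{i+1} }, in increasing order *)
Definition block (g : seq nat) (i : nat) : seq nat :=
  iota (sumn (take i g)).+1 (nth 0 g i).

Definition unimodal (g : seq nat) (S : seq nat) : bool :=
  all (fun i =>
         let L := [seq x <- block g i | x \notin Sset g] in
         prefix [seq x <- L | x \in S] L)
      (iota 0 (size g)).

Definition inV (n : nat) (a g : seq nat) : bool :=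
  is_composition n g && unimodal g (Sset a).

Definition m_count (a : seq nat) : nat :=
  count (fun x => 1 < x) (take (size a).-1 a).

From mathcomp Require Import all_boot zify.
Set Implicit Arguments. Unset Strict Implicit. Unset Printing Implicit Defensive.

(* A composition of n is determined by the indicator bitseq t of its descent
   set in [n-1] (bit k <-> k+1 in S).  Peeling off the blocks one at a time
   shows that S is gamma-unimodal iff every ascent of S (j \notin S,
   j+1 \in S) has j or j+1 in S_gamma.  So V_alpha corresponds to the
   bitseqs t of length n-1 that, at each ascent k of the indicator of
   S_alpha, have bit k or bit k+1 set.  These ascents come from the parts
   alpha_i > 1 with i < l and occupy pairwise disjoint pairs of positions;
   each one excludes one of the four values of (t_k, t_(k+1)), which gives
   2^(n-1) (3/4)^m. *)

Lemma prefix_filterE (T : eqType) (p : pred T) (s : seq T) :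
  prefix [seq x <- s | p x] s = sorted (fun x y => p x || ~~ p y) s.
Proof.
elim: s => //= x s IHs; case: (boolP (p x)) => px /=.
  by rewrite eqxx IHs; case: s {IHs} => //= y s; rewrite px.
transitivity (~~ has p s).
  case E: [seq y <- s | p y] => [|y f] /=; first by rewrite has_filter E.
  have: y \in [seq y <- s | p y] by rewrite E mem_head.
  rewrite mem_filter has_filter E /= => /andP[py _].
  by case: eqP py px => // ->->.
elim: s {IHs} x px => //= y s IHs x px; rewrite (negbTE px) /=.
by case: (boolP (p y)) => py //=; exact: IHs.
Qed.

Lemma sorted_iota (r : rel nat) (m n : nat) :
  sorted r (iota m n) = all (fun i => r i i.+1) (iota m n.-1).
Proof. by elim: n m => [|[|n] IHn] m //=; rewrite -IHn. Qed.

Lemma iota_succ (m n : nat) : iota m.+1 n = map succn (iota m n).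
Proof. by rewrite -add1n iotaDl. Qed.

Lemma Sset_consE (x : nat) (c : seq nat) :
  Sset (x :: c) = [seq x + sumn (take i c) | i <- iota 0 (size c)].
Proof. by rewrite /Sset /= -add1n iotaDl -map_comp. Qed.

Lemma Sset_consS (x : nat) (c : seq nat) :
  Sset (x.+1 :: c) = map succn (Sset (x :: c)).
Proof. by rewrite !Sset_consE -map_comp. Qed.

Lemma Sset_cons2 (x y : nat) (c : seq nat) :
  Sset [:: x, y & c] = x :: map (addn x) (Sset (y :: c)).
Proof. by rewrite !Sset_consE /= addn0 -add1n iotaDl -!map_comp. Qed.

Lemma Sset_ge (x : nat) (c : seq nat) (z : nat) : z \in Sset (x :: c) -> x <= z.
Proof. by rewrite Sset_consE => /mapP[i _ ->]; rewrite leq_addr. Qed.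

Lemma blockS (x : nat) (c : seq nat) (i : nat) :
  block (x :: c) i.+1 = map (addn x) (block c i).
Proof. by rewrite /block /= -iotaDl addnS. Qed.

Lemma block_gt0 (g : seq nat) (i z : nat) : z \in block g i -> 0 < z.
Proof. by rewrite mem_iota => /andP[lt_z _]; exact: leq_trans (ltn0Sn _) lt_z. Qed.

(* [unimodal] with the set S generalised to a predicate, so that it can be
   shifted along with the blocks. *)
Definition unimodal_pred (g : seq nat) (P : pred nat) : bool :=
  all (fun i => let L := [seq x <- block g i | x \notin Sset g] in
                prefix [seq x <- L | P x] L)
      (iota 0 (size g)).

Lemma unimodal_predE (g S : seq nat) : unimodal g S = unimodal_pred g (mem S).
Proof. by []. Qed.

Definition ascent (P : pred nat) (j : nat) : bool := ~~ P j && P j.+1.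

Lemma prefix_filter_iota (P : pred nat) (m n : nat) :
  prefix [seq x <- iota m n | P x] (iota m n) = all (fun j => ~~ ascent P j) (iota m n.-1).
Proof.
by rewrite prefix_filterE sorted_iota; apply: eq_all => j; rewrite negb_and negbK.
Qed.

Lemma prefix_filter_map (T1 T2 : eqType) (f : T1 -> T2) (p : pred T2) (s : seq T1) :
  prefix [seq y <- map f s | p y] (map f s) = prefix [seq x <- s | p (f x)] s.
Proof. by rewrite !prefix_filterE sorted_map. Qed.

(* [x - (c != [::])] is the size of the first block minus S_g. *)
Lemma unimodal_pred_cons (x : nat) (c : seq nat) (P : pred nat) :
  unimodal_pred (x :: c) P =
  all (fun j => ~~ ascent P j) (iota 1 (x - (c != [::])).-1) &&
  unimodal_pred c (fun z => P (x + z)).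
Proof.
case: c => [|y c].
  by rewrite /unimodal_pred /= subn0 -prefix_filter_iota !andbT filter_predT.
rewrite /unimodal_pred Sset_cons2 subn1.
have -> : iota 0 (size [:: x, y & c]) = 0 :: map succn (iota 0 (size (y :: c))).
  by rewrite -iota_succ.
set T := Sset (y :: c).
have first_block : [seq z <- iota 1 x | z \notin x :: map (addn x) T] = iota 1 x.-1.
  rewrite -(filter_iota_ltn 1 (leq_pred x)); apply: eq_in_filter => z.
  rewrite mem_iota in_cons => /andP[z_gt0 z_lt].
  case: eqVneq => [-> | ne_zx] /=; first lia.
  have -> : (z \in map (addn x) T) = false by apply/mapP => -[t _ ez]; lia.
  lia.
have later_blocks i : [seq z <- block [:: x, y & c] i.+1 | z \notin x :: map (addn x) T] =
    map (addn x) [seq z <- block (y :: c) i | z \notin T].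
  rewrite blockS filter_map; congr map; apply: eq_in_filter => z /block_gt0 z_gt0 /=.
  by rewrite in_cons -{2}[x]addn0 eqn_add2l gtn_eqF // (mem_map (@addnI x)).
move: (iota 0 _) => l; rewrite /= all_map.
congr andb; first by rewrite -prefix_filter_iota -first_block.
by apply: eq_all => i /=; rewrite later_blocks prefix_filter_map.
Qed.

(* The composition of (size t).+1 whose descent set has indicator t. *)
Fixpoint comp_of_bits (t : bitseq) : seq nat :=
  if t is b :: t' then
    if b then 1 :: comp_of_bits t'
    else if comp_of_bits t' is x :: g then x.+1 :: g else [::]
  else [:: 1].

Fixpoint bits_of_comp (g : seq nat) : bitseq :=
  if g is x :: g' then
    if g' is [::] then nseq x.-1 false
    else nseq x.-1 false ++ true :: bits_of_comp g'
  else [::].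

Lemma comp_of_bits_neq0 (t : bitseq) : comp_of_bits t != [::].
Proof. by elim: t => [|[] t] //=; case: (comp_of_bits t). Qed.

Lemma comp_of_bits_gt0 (t : bitseq) : all (fun x => 0 < x) (comp_of_bits t).
Proof. by elim: t => [|[] t] //=; case: (comp_of_bits t) => //= x g /andP[_ ->]. Qed.

Lemma sumn_comp_of_bits (t : bitseq) : sumn (comp_of_bits t) = (size t).+1.
Proof. by elim: t => [|[] t] //=; case: (comp_of_bits t) => //= x g <-. Qed.

Lemma comp_of_bitsK : cancel comp_of_bits bits_of_comp.
Proof.
elim=> [|[] t IHt] //=.
  by case: (comp_of_bits t) (comp_of_bits_neq0 t) IHt => // x g _ ->.
case: (comp_of_bits t) (comp_of_bits_neq0 t) (comp_of_bits_gt0 t) IHt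
  => [|[|x] g] //= _ _ <-.
by case: g.
Qed.

Lemma comp_of_bits_nseq (k : nat) (t : bitseq) :
  comp_of_bits (nseq k false ++ t) =
  if comp_of_bits t is x :: g then (x + k) :: g else [::].
Proof.
elim: k => [|k /= ->]; first by case: (comp_of_bits t) => // x g; rewrite addn0.
by case: (comp_of_bits t) => // x g; rewrite addnS.
Qed.

Lemma bits_of_compK (g : seq nat) :
  g != [::] -> all (fun x => 0 < x) g -> comp_of_bits (bits_of_comp g) = g.
Proof.
elim: g => [|x [|y g] IHg] //= _ /andP[x_gt0 g_gt0].
  by rewrite -[nseq _ _]cats0 comp_of_bits_nseq /= add1n prednK.
by rewrite comp_of_bits_nseq /= IHg //= add1n prednK.
Qed.

Lemma nth_comp_of_bits0 (t : bitseq) (x : nat) (g : seq nat) :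
  comp_of_bits t = x :: g -> nth false t 0 = (x == 1) && (g != [::]).
Proof.
case: t => [[<- <-] | [] t] //=.
  by case: (comp_of_bits t) (comp_of_bits_neq0 t) => // y h _ [<- <-].
by case: (comp_of_bits t) (comp_of_bits_gt0 t) => [|[|y] h] //= _ [<-].
Qed.

Lemma mem_Sset_comp_of_bits (t : bitseq) (k : nat) :
  (k.+1 \in Sset (comp_of_bits t)) = nth false t k.
Proof.
elim: t k => [|[] t IHt] k /=; first by rewrite nth_nil.
  case: (comp_of_bits t) (comp_of_bits_neq0 t) IHt => // x g _ IHt.
  by rewrite Sset_cons2 in_cons; case: k => //= k; rewrite (mem_map (@addnI 1)) IHt.
case: (comp_of_bits t) (comp_of_bits_neq0 t) (comp_of_bits_gt0 t) IHt
  => // x g _ /andP[x_gt0 _] IHt.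
rewrite Sset_consS (mem_map succn_inj); case: k => [|k] //.
by apply/negbTE/negP => /Sset_ge; lia.
Qed.

Definition covers_ascents (Q : pred nat) (t : bitseq) : bool :=
  all (fun k => ascent Q k ==> nth false t k || nth false t k.+1) (iota 0 (size t)).

Lemma covers_ascents_cons (Q : pred nat) (b : bool) (t : bitseq) :
  covers_ascents Q (b :: t) =
  (ascent Q 0 ==> b || nth false t 0) && covers_ascents (fun k => Q k.+1) t.
Proof. by rewrite /covers_ascents /= iota_succ all_map. Qed.

Lemma unimodal_pred_comp_of_bits (t : bitseq) (P : pred nat) :
  unimodal_pred (comp_of_bits t) P = covers_ascents (fun k => P k.+1) t.
Proof.
elim: t P => [|[] t IHt] P; first by rewrite unimodal_pred_cons.
  by rewrite /= unimodal_pred_cons covers_ascents_cons IHt implybT; case: (_ != _).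
rewrite /= covers_ascents_cons.
case E: (comp_of_bits t) (comp_of_bits_neq0 t) (comp_of_bits_gt0 t) (IHt (fun z => P z.+1))
  => [|x g] // _ /andP[x_gt0 _].
(* A leading 0 bit lengthens the first part by one: the only new constraint is
   the ascent at 1, covered iff the old first part was a cut singleton. *)
rewrite (nth_comp_of_bits0 E) !unimodal_pred_cons => <-; rewrite andbA; congr andb.
have -> : (x == 1) && (g != [::]) = (x - (g != [::]) == 0) by case: (g != [::]); lia.
rewrite subSn; last exact: leq_trans (leq_b1 _) x_gt0.
case: (x - _) => [|k] /=; first by rewrite implybT.
by rewrite (iota_succ 1) all_map implybF.
Qed.

Fixpoint bitseqs (k : nat) : seq bitseq :=
  if k is k'.+1 then [seq false :: t | t <- bitseqs k'] ++ [seq true :: t | t <- bitseqs k']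
  else [:: [::]].

Lemma mem_bitseqs (k : nat) (t : bitseq) : (t \in bitseqs k) = (size t == k).
Proof.
elim: k t => [|k IHk] [|b t] //=; rewrite mem_cat.
  by apply/negbTE; rewrite negb_or; apply/andP; split; apply/mapP => -[].
have cons_mem c : (b :: t \in [seq c :: u | u <- bitseqs k]) = (b == c) && (size t == k).
  by rewrite -IHk; apply/mapP/andP => [[u u_in [-> ->]] | [/eqP -> t_in]]; last exists t.
by rewrite !cons_mem eqSS; case: b {cons_mem}; rewrite /= ?orbF.
Qed.

Lemma bitseqs_uniq (k : nat) : uniq (bitseqs k).
Proof.
elim: k => //= k IHk; rewrite cat_uniq !map_inj_uniq; try by move=> u v [].
rewrite IHk andbT /=; apply/hasPn => _ /mapP[u _ ->]; by apply/mapP => -[].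
Qed.

Lemma count_bitseqsS (p : pred bitseq) (k : nat) :
  count p (bitseqs k.+1) =
  count (fun t => p (false :: t)) (bitseqs k) + count (fun t => p (true :: t)) (bitseqs k).
Proof. by rewrite /= count_cat !count_map. Qed.

Definition ascents (s : bitseq) : nat := count (ascent (nth false s)) (iota 0 (size s)).

Lemma ascents_cons (b : bool) (s : bitseq) :
  ascents (b :: s) = ascent (nth false (b :: s)) 0 + ascents s.
Proof. by rewrite /ascents /= iota_succ count_map. Qed.

Lemma count_covers_ascents (s : bitseq) :
  count (covers_ascents (nth false s)) (bitseqs (size s)) * 4 ^ ascents s =
  2 ^ size s * 3 ^ ascents s.
Proof.
have [m] := ubnP (size s); elim: m s => // m IHm [|b s] // /ltnSE size_lt.
case: (boolP (ascent (nth false (b :: s)) 0)) => [asc | no_asc].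
  move: asc size_lt; case: b; case: s => [|[] s] // _ size_lt.
  have two_heads c d :
      (fun u => covers_ascents (nth false [:: false, true & s]) [:: c, d & u]) =1
      (fun u => (c || d) && covers_ascents (nth false s) u).
    by move=> u; rewrite !covers_ascents_cons.
  rewrite (_ : size _ = (size s).+2) // !count_bitseqsS !(eq_count (two_heads _ _)) /=.
  have size_s : size s < m by apply: leq_trans size_lt.
  rewrite count_pred0 !ascents_cons /= !add0n !add1n !expnS.
  move: (IHm s size_s); set N := count _ _; nia.
have drop_head c : (fun t => covers_ascents (nth false (b :: s)) (c :: t)) =1
    covers_ascents (nth false s).
  by move=> t; rewrite covers_ascents_cons (negbTE no_asc).
rewrite count_bitseqsS !(eq_count (drop_head _)) ascents_cons (negbTE no_asc).
by rewrite addnn -mul2n -mulnA IHm // expnS mulnA.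
Qed.

Lemma ascents_nseq (k : nat) (r : bitseq) :
  ascents (nseq k false ++ r) = (0 < k) && nth false r 0 + ascents r.
Proof.
elim: k => [|k IHk] //; rewrite cat_cons ascents_cons IHk addnA; congr (_ + _).
by case: k {IHk} => [|k] /=; rewrite ?addn0.
Qed.

Lemma ascents_bits_of_comp (a : seq nat) : ascents (bits_of_comp a) = m_count a.
Proof.
elim: a => [|x [|y g] IHa] //.
  by rewrite /= -[nseq _ _]cats0 ascents_nseq andbF.
by rewrite [bits_of_comp _]/= ascents_nseq ascents_cons IHa /= andbT ltn_predRL.
Qed.

Lemma composition_bitsK (n : nat) (g : seq nat) : 0 < n -> is_composition n g ->
  comp_of_bits (bits_of_comp g) = g /\ size (bits_of_comp g) = n.-1.
Proof.
move=> n_gt0 /andP[g_gt0 /eqP sum_g].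
have g_neq0 : g != [::] by apply: contraTneq n_gt0 => g0; rewrite -sum_g g0.
have gK := bits_of_compK g_neq0 g_gt0.
by split; rewrite // -sum_g -{2}gK sumn_comp_of_bits.
Qed.

Lemma inV_comp_of_bits (n : nat) (s t : bitseq) : 0 < n -> size t = n.-1 ->
  inV n (comp_of_bits s) (comp_of_bits t) = covers_ascents (nth false s) t.
Proof.
move=> n_gt0 size_t.
rewrite /inV /is_composition comp_of_bits_gt0 sumn_comp_of_bits size_t prednK // eqxx.
rewrite unimodal_predE unimodal_pred_comp_of_bits.
by apply: eq_all => k; rewrite /ascent /= !mem_Sset_comp_of_bits.
Qed.

Theorem proposition2p1 (n : nat) (a : seq nat) :
  1 <= n -> is_composition n a ->
  exists s : seq (seq nat),
    [/\ uniq s, (forall g, (g \in s) = inV n a g) &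
        size s * 4 ^ m_count a = 2 ^ n.-1 * 3 ^ m_count a].
Proof.
move=> n_gt0 a_comp; have [aK size_s] := composition_bitsK n_gt0 a_comp.
set s := bits_of_comp a in aK size_s.
exists [seq comp_of_bits t | t <- bitseqs n.-1 & covers_ascents (nth false s) t]; split.
- by rewrite (map_inj_uniq (can_inj comp_of_bitsK)) filter_uniq ?bitseqs_uniq.
- move=> g; apply/mapP/idP => [[t] | g_in].
    rewrite mem_filter mem_bitseqs => /andP[cov /eqP size_t] ->.
    by rewrite -aK inV_comp_of_bits.
  have [gK size_t] := composition_bitsK n_gt0 (andP g_in).1.
  exists (bits_of_comp g) => //.
  rewrite mem_filter mem_bitseqs size_t eqxx andbT.
  by rewrite -(inV_comp_of_bits _ n_gt0 size_t) gK aK.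
- by rewrite size_map size_filter -size_s -ascents_bits_of_comp count_covers_ascents.
Qed.
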